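(* Let $p\geq 3$ and put $\lambda=\lambda_p=2\cos(\pi/p)$. Every $G_p$-equivalence class of $\lambda$-BQFs contains either only hyperbolic forms or no hyperbolic forms.
   Context: Let $S=\begin{pmatrix}1&\lambda\\0&1\end{pmatrix}$, $T=\begin{pmatrix}0&-1\\1&0\end{pmatrix}$, and $G_p=\langle S,T\rangle/\{\pm I\}$, acting on $\mathbb{C}\cup\{\infty\}$ by linear fractional transformations. An element $\begin{pmatrix}a&b\\c&d\end{pmatrix}$ is hyperbolic if $|a+d|>2$; a hyperbolic fixed point is a real number fixed by a hyperbolic element of $G_p$. A $\lambda$-BQF is $Q(x,y)=Ax^2+Bxy+Cy^2=[A,B,C]$ with $A,B,C\in\mathbb{Z}[\lambda]$ and positive discriminant $B^2-4AC$. For $M=\begin{pmatrix}a&b\\c&d\end{pmatrix}\in G_p$, $(Q\circ M)(x,y)=Q(ax+by,cx+dy)$; $Q$ and $Q'$ are $G_p$-equivalent if $Q'=Q\circ V$ for some $V\in G_p$. For a hyperbolic fixed point $\alpha$, choose a matrix $\begin{pmatrix}a&b\\c&d\end{pmatrix}$ representing a generator of the stabilizer of $\alpha$ in $G_p$, replaced by its inverse if necessary so that $\alpha=\frac{a-d+\sqrt{D}}{2c}$ with $D=(a+d)^2-4$; then $Q_\alpha=[c,d-a,-b]$. A $\lambda$-BQF is hyperbolic if it equals $Q_\alpha$ for some hyperbolic fixed point $\alpha$. *)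

From Stdlib Require Import Reals ZArith Lra.
Open Scope R_scope.

Record mat := Mat { ma : R; mb : R; mc : R; md : R }.

Definition mmul (M N : mat) : mat :=
  Mat (ma M * ma N + mb M * mc N) (ma M * mb N + mb M * md N)
      (mc M * ma N + md M * mc N) (mc M * mb N + md M * md N).
Definition mid : mat := Mat 1 0 0 1.
Definition mneg (M : mat) : mat := Mat (- ma M) (- mb M) (- mc M) (- md M).
(* inverse of a determinant-1 matrix (all elements of G_p have det 1) *)
Definition minv (M : mat) : mat := Mat (md M) (- mb M) (- mc M) (ma M).

Fixpoint mpow_nat (M : mat) (n : nat) : mat :=
  match n with O => mid | S k => mmul M (mpow_nat M k) end.
Definition mpow (M : mat) (k : Z) : mat :=
  match k with
  | Z0 => mid
  | Zpos p => mpow_nat M (Pos.to_nat p)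
  | Zneg p => mpow_nat (minv M) (Pos.to_nat p)
  end.

Definition lam (p : nat) : R := 2 * cos (PI / INR p).

Definition Smat (p : nat) : mat := Mat 1 (lam p) 0 1.
Definition Tmat : mat := Mat 0 (-1) 1 0.

(* The matrix group <S, T> in SL_2(R); G_p is its image modulo {+-I}. *)
Inductive inGp (p : nat) : mat -> Prop :=
| inGp_id : inGp p mid
| inGp_S  : forall M, inGp p M -> inGp p (mmul (Smat p) M)
| inGp_Si : forall M, inGp p M -> inGp p (mmul (minv (Smat p)) M)
| inGp_T  : forall M, inGp p M -> inGp p (mmul Tmat M)
| inGp_Ti : forall M, inGp p M -> inGp p (mmul (minv Tmat) M).

Definition hyperbolic_mat (M : mat) : Prop := Rabs (ma M + md M) > 2.

Definition fixes (M : mat) (x : R) : Prop :=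
  mc M * x + md M <> 0 /\ (ma M * x + mb M) / (mc M * x + md M) = x.

Definition hyp_fixed_point (p : nat) (alpha : R) : Prop :=
  exists M, inGp p M /\ hyperbolic_mat M /\ fixes M alpha.

Definition stab_generator (p : nat) (alpha : R) (M : mat) : Prop :=
  inGp p M /\ fixes M alpha /\
  forall N, inGp p N -> fixes N alpha ->
    exists k : Z, N = mpow M k \/ N = mneg (mpow M k).

Inductive inZlam (l : R) : R -> Prop :=
| Zl_int : forall z : Z, inZlam l (IZR z)
| Zl_lam : inZlam l l
| Zl_add : forall x y, inZlam l x -> inZlam l y -> inZlam l (x + y)
| Zl_opp : forall x, inZlam l x -> inZlam l (- x)
| Zl_mul : forall x y, inZlam l x -> inZlam l y -> inZlam l (x * y).

(* binary quadratic forms [A, B, C] = A x^2 + B x y + C y^2 *)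
Record bqf := BQF { fA : R; fB : R; fC : R }.

Definition disc (Q : bqf) : R := fB Q * fB Q - 4 * fA Q * fC Q.

Definition lam_BQF (p : nat) (Q : bqf) : Prop :=
  inZlam (lam p) (fA Q) /\ inZlam (lam p) (fB Q) /\ inZlam (lam p) (fC Q)
  /\ disc Q > 0.

(* (Q o M)(x,y) = Q(a x + b y, c x + d y) *)
Definition bqf_act (Q : bqf) (M : mat) : bqf :=
  let a := ma M in let b := mb M in let c := mc M in let d := md M in
  BQF (fA Q * a * a + fB Q * a * c + fC Q * c * c)
      (2 * fA Q * a * b + fB Q * (a * d + b * c) + 2 * fC Q * c * d)
      (fA Q * b * b + fB Q * b * d + fC Q * d * d).

Definition Gp_equiv (p : nat) (Q Q' : bqf) : Prop :=
  exists V, inGp p V /\ Q' = bqf_act Q V.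

Definition is_Q_alpha (p : nat) (alpha : R) (Q : bqf) : Prop :=
  hyp_fixed_point p alpha /\
  exists M, stab_generator p alpha M /\ mc M <> 0 /\
    alpha = (ma M - md M + sqrt ((ma M + md M) ^ 2 - 4)) / (2 * mc M) /\
    Q = BQF (mc M) (md M - ma M) (- mb M).

Definition hyperbolic_BQF (p : nat) (Q : bqf) : Prop :=
  exists alpha, is_Q_alpha p alpha Q.

(* If Q = Q_alpha and M generates the stabiliser of alpha, then for V in G_p
   the form Q o V is Q_{alpha'} with alpha' = V^-1 alpha and generator V^-1 M V:
   Q_M o V = Q_{adj(V) M V} holds identically, fixed points and their multipliers
   c x + d are transported by conjugation, and the multiplier selects the sign of
   the square root in the formula for alpha.  What can fail is that alpha' = oo or
   that V^-1 M V is upper triangular; both would give a hyperbolic element of G_p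
   fixing oo.  Conjugating S by such an element yields a translation by some t with
   0 < t < lambda, and a ping-pong argument for the decomposition of G_p into
   alternating words in T and U = S T (of orders 2 and p modulo -I) shows that no
   such translation lies in G_p. *)

From Stdlib Require Import Reals Lra Lia.
Open Scope R_scope.

Ltac mat_ring := repeat match goal with M : mat |- _ => destruct M end;
  unfold mmul, minv, mneg, mid; cbn; f_equal; ring.

Lemma mmulA A B C : mmul A (mmul B C) = mmul (mmul A B) C.
Proof. mat_ring. Qed.
Lemma mmul1m A : mmul mid A = A.
Proof. mat_ring. Qed.
Lemma mmulm1 A : mmul A mid = A.
Proof. mat_ring. Qed.
Lemma mmulNm A B : mmul (mneg A) B = mneg (mmul A B).
Proof. mat_ring. Qed.
Lemma mmulmN A B : mmul A (mneg B) = mneg (mmul A B).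
Proof. mat_ring. Qed.
Lemma mnegK A : mneg (mneg A) = A.
Proof. mat_ring. Qed.
Lemma minvM A B : minv (mmul A B) = mmul (minv B) (minv A).
Proof. mat_ring. Qed.
Lemma minvK A : minv (minv A) = A.
Proof. mat_ring. Qed.
Lemma minv1 : minv mid = mid.
Proof. mat_ring. Qed.

Definition det (M : mat) : R := ma M * md M - mb M * mc M.

Lemma det_mmul A B : det (mmul A B) = det A * det B.
Proof. destruct A, B; unfold det, mmul; cbn; ring. Qed.

Lemma det_minv A : det (minv A) = det A.
Proof. destruct A; unfold det, minv; cbn; ring. Qed.

Lemma mmulmV A : det A = 1 -> mmul A (minv A) = mid.
Proof. destruct A; unfold det, mmul, minv, mid; cbn; intro; f_equal; lra. Qed.
Lemma mmulVm A : det A = 1 -> mmul (minv A) A = mid.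
Proof. destruct A; unfold det, mmul, minv, mid; cbn; intro; f_equal; lra. Qed.

Lemma mc_mpow A k : mc A = 0 -> mc (mpow A k) = 0.
Proof.
  intro Hc.
  assert (Hnat : forall B n, mc B = 0 -> mc (mpow_nat B n) = 0).
  { intros B n HB; induction n as [|n IH]; cbn; [reflexivity|]. rewrite HB, IH; ring. }
  destruct k; cbn; auto; apply Hnat; cbn; rewrite ?Hc; ring.
Qed.

Definition mvec (M : mat) (v : R * R) : R * R :=
  (ma M * fst v + mb M * snd v, mc M * fst v + md M * snd v).

Lemma mvec_mmul A B v : mvec (mmul A B) v = mvec A (mvec B v).
Proof. destruct A, B, v; unfold mvec, mmul; cbn; f_equal; ring. Qed.

Lemma mvec_mid v : mvec mid v = v.
Proof. destruct v; unfold mvec, mid; cbn. f_equal; ring. Qed.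

Definition mconj (V M : mat) : mat := mmul (minv V) (mmul M V).

Section Conjugation.
Variable V : mat.
Hypothesis HV : det V = 1.

Lemma mconj_mmul A B : mmul (mconj V A) (mconj V B) = mconj V (mmul A B).
Proof.
  unfold mconj. rewrite <- !mmulA, (mmulA V (minv V)), mmulmV, mmul1m by exact HV.
  reflexivity.
Qed.

Lemma mconj_mid : mconj V mid = mid.
Proof. unfold mconj. rewrite mmul1m. exact (mmulVm V HV). Qed.

Lemma mconj_mneg A : mconj V (mneg A) = mneg (mconj V A).
Proof. unfold mconj. rewrite mmulNm, mmulmN. reflexivity. Qed.

Lemma mconj_minv A : mconj V (minv A) = minv (mconj V A).
Proof. unfold mconj. rewrite !minvM, minvK, mmulA. reflexivity. Qed.

Lemma mconj_mpow A k : mconj V (mpow A k) = mpow (mconj V A) k.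
Proof.
  assert (Hnat : forall B n, mconj V (mpow_nat B n) = mpow_nat (mconj V B) n).
  { intros B n; induction n as [|n IH]; cbn; [exact mconj_mid|].
    rewrite <- IH, mconj_mmul. reflexivity. }
  destruct k; cbn; [exact mconj_mid| |rewrite <- mconj_minv]; apply Hnat.
Qed.

Lemma mconjK A : mconj (minv V) (mconj V A) = A.
Proof.
  unfold mconj. rewrite minvK, !mmulA, mmulmV, mmul1m, <- mmulA, mmulmV, mmulm1 by exact HV.
  reflexivity.
Qed.

Lemma mconj_trace A : ma (mconj V A) + md (mconj V A) = ma A + md A.
Proof.
  revert HV. destruct V as [a b c d], A as [a' b' c' d']; unfold det, mconj, mmul, minv; cbn.
  intro Hd. transitivity ((a' + d') * (a * d - b * c)); [ring|]. rewrite Hd; ring.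
Qed.

End Conjugation.

Section Group.
Variable p : nat.

Lemma inGp_det M : inGp p M -> det M = 1.
Proof. induction 1; rewrite ?det_mmul, ?IHinGp; unfold det; cbn; ring. Qed.

Lemma inGp_mul A B : inGp p A -> inGp p B -> inGp p (mmul A B).
Proof.
  induction 1 as [| |A|A|A]; intro HB; [rewrite mmul1m; exact HB| ..];
    rewrite <- mmulA; constructor; auto.
Qed.

Lemma inGp_of_lmul X : (forall M, inGp p M -> inGp p (mmul X M)) -> inGp p X.
Proof. intro H. rewrite <- (mmulm1 X). apply H, inGp_id. Qed.

Lemma inGp_Smat : inGp p (Smat p).
Proof. apply inGp_of_lmul, inGp_S. Qed.

Lemma inGp_inv A : inGp p A -> inGp p (minv A).
Proof.
  induction 1; rewrite ?minv1, ?minvM, ?minvK; try apply inGp_id;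
    apply inGp_mul; auto; apply inGp_of_lmul; auto using inGp_S, inGp_Si, inGp_T, inGp_Ti.
Qed.

Lemma inGp_mconj V A : inGp p V -> inGp p A -> inGp p (mconj V A).
Proof. intros. unfold mconj. auto using inGp_mul, inGp_inv. Qed.

End Group.

Fixpoint cheb (l : R) (n : nat) : R :=
  match n with
  | O => 0
  | S O => 1
  | S ((S k) as m) => l * cheb l m - cheb l k
  end.

Lemma cheb_SS l n : cheb l (S (S n)) = l * cheb l (S n) - cheb l n.
Proof. reflexivity. Qed.

Lemma cheb_sin t n : cheb (2 * cos t) n * sin t = sin (INR n * t).
Proof.
  enough (H : cheb (2 * cos t) n * sin t = sin (INR n * t) /\
              cheb (2 * cos t) (S n) * sin t = sin (INR (S n) * t)) by apply H.
  induction n as [|n [IH0 IH1]].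
  - cbn. rewrite !Rmult_0_l, !Rmult_1_l, sin_0. split; reflexivity.
  - split; [exact IH1|].
    replace (INR (S (S n)) * t) with (INR (S n) * t + t) by (rewrite (S_INR (S n)); ring).
    replace (INR n * t) with (INR (S n) * t - t) in IH0 by (rewrite (S_INR n); ring).
    rewrite sin_minus in IH0. rewrite sin_plus.
    rewrite cheb_SS.
    transitivity (2 * cos t * (cheb (2 * cos t) (S n) * sin t) - cheb (2 * cos t) n * sin t);
      [ring|]. rewrite IH0, IH1. ring.
Qed.

(* U = S T *)
Definition Umat (p : nat) : mat := Mat (lam p) (-1) 1 0.
Definition Upow (p j : nat) : mat := mpow_nat (Umat p) j.

Lemma Upow_S p k : Upow p (S k) =
  Mat (cheb (lam p) (S (S k))) (- cheb (lam p) (S k)) (cheb (lam p) (S k)) (- cheb (lam p) k).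
Proof.
  induction k as [|k IH].
  - cbn. unfold Umat, mmul, mid; cbn. f_equal; ring.
  - unfold Upow in *. cbn [mpow_nat] in *. rewrite IH. unfold mmul, Umat; cbn [ma mb mc md].
    rewrite !cheb_SS. f_equal; ring.
Qed.

Lemma Smat_UT p : Smat p = mneg (mmul (Umat p) Tmat).
Proof. unfold Smat, Umat, Tmat, mmul, mneg; cbn. f_equal; ring. Qed.

Lemma Tmat_mul_Tmat : mmul Tmat Tmat = mneg mid.
Proof. unfold mmul, Tmat, mneg, mid; cbn. f_equal; ring. Qed.

Section Hecke.
Variable p : nat.
Hypothesis Hp : (3 <= p)%nat.

Let theta := PI / INR p.

Lemma INR_p_pos : 0 < INR p.
Proof. apply lt_0_INR; lia. Qed.

Lemma multiple_theta_bounds k : (0 < k < p)%nat -> 0 < INR k * theta < PI.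
Proof.
  intro Hk. pose proof INR_p_pos. pose proof PI_RGT_0.
  assert (0 < INR k /\ INR k < INR p) as [Hk0 Hkp] by (split; [apply lt_0_INR|apply lt_INR]; lia).
  unfold theta. split.
  - apply Rmult_lt_0_compat; [lra|]. apply Rdiv_lt_0_compat; lra.
  - apply (Rmult_lt_reg_r (INR p)); [lra|].
    replace (INR k * (PI / INR p) * INR p) with (INR k * PI) by (field; lra). nra.
Qed.

Lemma sin_theta_pos : 0 < sin theta.
Proof.
  pose proof (multiple_theta_bounds 1 ltac:(lia)) as H. rewrite Rmult_1_l in H.
  apply sin_gt_0; apply H.
Qed.

Lemma cheb_lam n : cheb (lam p) n = sin (INR n * theta) / sin theta.
Proof.
  pose proof sin_theta_pos. change (lam p) with (2 * cos theta).
  rewrite <- (cheb_sin theta n). field. lra.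
Qed.

Lemma lam_pos : 0 < lam p.
Proof.
  pose proof (multiple_theta_bounds 2 ltac:(lia)) as H.
  assert (E : cheb (lam p) 2 = lam p) by (cbn; ring).
  rewrite <- E, cheb_lam. pose proof sin_theta_pos.
  apply Rdiv_lt_0_compat; [apply sin_gt_0; apply H | lra].
Qed.

Lemma cheb_pos k : (0 < k < p)%nat -> 0 < cheb (lam p) k.
Proof.
  intro Hk. rewrite cheb_lam. pose proof sin_theta_pos. pose proof (multiple_theta_bounds k Hk).
  apply Rdiv_lt_0_compat; [apply sin_gt_0|]; lra.
Qed.

Lemma cheb_p : cheb (lam p) p = 0.
Proof.
  rewrite cheb_lam. unfold theta. pose proof INR_p_pos.
  replace (INR p * (PI / INR p)) with PI by (field; lra). rewrite sin_PI. unfold Rdiv; ring.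
Qed.

Lemma cheb_nonneg k : (k <= p)%nat -> 0 <= cheb (lam p) k.
Proof.
  intro Hk. destruct k as [|k]; [cbn; lra|].
  destruct (Nat.eq_dec (S k) p) as [->|]; [rewrite cheb_p; lra|].
  left. apply cheb_pos. lia.
Qed.

Lemma cheb_pred_p : cheb (lam p) (p - 1) = 1.
Proof.
  pose proof INR_p_pos. pose proof sin_theta_pos.
  rewrite cheb_lam, minus_INR by lia.
  replace ((INR p - INR 1) * theta) with (PI - theta) by (unfold theta; cbn; field; lra).
  rewrite sin_PI_x. field. lra.
Qed.

Lemma Upow_p : Upow p p = mneg mid.
Proof.
  replace p with (S (p - 1)) at 2 by lia. rewrite Upow_S, cheb_SS.
  replace (S (p - 1)) with p by lia. rewrite cheb_p, cheb_pred_p.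
  unfold mneg, mid; cbn. f_equal; ring.
Qed.

Lemma Upow_pred_p : Upow p (p - 1) = Mat 0 (-1) 1 (- lam p).
Proof.
  assert (E : cheb (lam p) (p - 2) = lam p).
  { pose proof cheb_p as H. replace p with (S (S (p - 2))) in H at 2 by lia.
    rewrite cheb_SS in H. replace (S (p - 2)) with (p - 1)%nat in H by lia.
    rewrite cheb_pred_p in H. lra. }
  replace (p - 1)%nat with (S (p - 2)) by lia. rewrite Upow_S.
  replace (S (S (p - 2))) with p by lia. replace (S (p - 2)) with (p - 1)%nat by lia.
  rewrite cheb_p, cheb_pred_p, E. reflexivity.
Qed.

End Hecke.

(** * Ping-pong *)

Definition maps_into (M : mat) (A B : R * R -> Prop) : Prop :=
  forall v, A v -> B (mvec M v).

Lemma maps_into_mmul M N A B C :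
  maps_into N A B -> maps_into M B C -> maps_into (mmul M N) A C.
Proof. intros HN HM v Hv. rewrite mvec_mmul. auto. Qed.

(* A vector (x, y) stands for the point x / y of the projective line.
   [Uregion l 1] is (l, oo) and [Uregion l j] for j >= 2 is (0, l). *)
Definition pos_ray (v : R * R) : Prop := 0 < fst v * snd v.
Definition neg_ray (v : R * R) : Prop := fst v * snd v < 0.
Definition Uregion (l : R) (j : nat) (v : R * R) : Prop :=
  match j with
  | 1%nat => 0 < snd v * (fst v - l * snd v)
  | _ => 0 < fst v * snd v /\ snd v * (fst v - l * snd v) < 0
  end.

Definition vopp (v : R * R) : R * R := (- fst v, - snd v).

Lemma maps_into_mneg M A B :
  (forall v, A v -> A (vopp v)) -> maps_into M A B -> maps_into (mneg M) A B.
Proof.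
  intros HA HM v Hv.
  replace (mvec (mneg M) v) with (mvec M (vopp v))
    by (destruct M, v; unfold mvec, mneg, vopp; cbn; f_equal; ring).
  auto.
Qed.

Lemma pos_ray_vopp v : pos_ray v -> pos_ray (vopp v).
Proof. destruct v; unfold pos_ray, vopp; cbn. lra. Qed.

Lemma neg_ray_vopp v : neg_ray v -> neg_ray (vopp v).
Proof. destruct v; unfold neg_ray, vopp; cbn. lra. Qed.

Lemma Tmat_pos_neg : maps_into Tmat pos_ray neg_ray.
Proof. intros [x y]. unfold pos_ray, neg_ray, mvec, Tmat; cbn. nra. Qed.

Section PingPong.
Variable p : nat.
Hypothesis Hp : (3 <= p)%nat.

Lemma Uregion_pos j v : (0 < j)%nat -> Uregion (lam p) j v -> pos_ray v.
Proof.
  pose proof (lam_pos p Hp). destruct v as [x y]. unfold Uregion, pos_ray; cbn.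
  destruct j as [|[|j]]; intros Hj Hv; [lia| nra | tauto].
Qed.

Lemma Upow_neg_Uregion j : (0 < j < p)%nat ->
  maps_into (Upow p j) neg_ray (Uregion (lam p) j).
Proof.
  intros Hj [x y]. unfold neg_ray; cbn [fst snd]. intro Hxy.
  destruct j as [|k]; [lia|]. rewrite Upow_S. unfold mvec, Uregion; cbn [ma mb mc md fst snd].
  pose proof (lam_pos p Hp).
  assert (HA : 0 <= cheb (lam p) (S (S k))) by (apply cheb_nonneg; lia).
  assert (HB : 0 < cheb (lam p) (S k)) by (apply cheb_pos; lia).
  destruct k as [|k].
  - cbn. nra.
  - assert (HC : 0 < cheb (lam p) (S k)) by (apply cheb_pos; lia).
    assert (HD : 0 <= cheb (lam p) k) by (apply cheb_nonneg; lia).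
    assert (RA := cheb_SS (lam p) (S k)). assert (RB := cheb_SS (lam p) k).
    set (A := cheb (lam p) (S (S (S k)))) in *.
    set (B := cheb (lam p) (S (S k))) in *.
    set (C := cheb (lam p) (S k)) in *.
    set (D := cheb (lam p) k) in *.
    assert (0 < x * x /\ 0 < y * y) as [Hx Hy] by (split; nra).
    split.
    + replace ((A * x + - B * y) * (B * x + - C * y))
        with (A * B * (x * x) + A * C * - (x * y) + B * B * - (x * y) + B * C * (y * y))
        by ring.
      assert (0 < B * B * - (x * y)) by (apply Rmult_lt_0_compat; nra).
      assert (0 <= A * B * (x * x) /\ 0 <= A * C * - (x * y) /\ 0 <= B * C * (y * y))
        by (repeat split; apply Rmult_le_pos; nra).
      lra.
    + replace ((B * x + - C * y) * (A * x + - B * y - lam p * (B * x + - C * y)))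
        with (- (B * C * (x * x) + B * D * - (x * y) + C * C * - (x * y) + C * D * (y * y)))
        by (rewrite RA; replace D with (lam p * C - B) by lra; ring).
      assert (0 < B * C * (x * x)) by (apply Rmult_lt_0_compat; nra).
      assert (0 <= B * D * - (x * y) /\ 0 <= C * C * - (x * y) /\ 0 <= C * D * (y * y))
        by (repeat split; apply Rmult_le_pos; nra).
      lra.
Qed.

Inductive Tword : mat -> Prop :=
| Tword_T : Tword Tmat
| Tword_TU j h : Uword j h -> Tword (mmul Tmat h)
with Uword : nat -> mat -> Prop :=
| Uword_U j : (0 < j < p)%nat -> Uword j (Upow p j)
| Uword_UT j h : (0 < j < p)%nat -> Tword h -> Uword j (mmul (Upow p j) h).

Scheme Tword_min := Minimality for Tword Sort Prop
with Uword_min := Minimality for Uword Sort Prop.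
Combined Scheme word_min from Tword_min, Uword_min.

Lemma word_ping_pong :
  (forall h, Tword h -> maps_into h pos_ray neg_ray \/ maps_into h neg_ray neg_ray) /\
  (forall j h, Uword j h -> (0 < j)%nat /\
     (maps_into h pos_ray (Uregion (lam p) j) \/ maps_into h neg_ray (Uregion (lam p) j))).
Proof.
  apply word_min.
  - left. exact Tmat_pos_neg.
  - intros j h _ [Hj [Hh|Hh]]; [left|right];
      (eapply maps_into_mmul; [|exact Tmat_pos_neg]);
      intros v Hv; apply (Uregion_pos j _ Hj), Hh, Hv.
  - intros j Hj. split; [lia|]. right. exact (Upow_neg_Uregion j Hj).
  - intros j h Hj _ [Hh|Hh]; (split; [lia|]); [left|right];
      (eapply maps_into_mmul; [exact Hh|]); apply Upow_neg_Uregion, Hj.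
Qed.

Definition reduced (h : mat) : Prop := h = mid \/ Tword h \/ exists j, Uword j h.
Definition reduced_up_to_sign (g : mat) : Prop :=
  exists h, (g = h \/ g = mneg h) /\ reduced h.

Lemma reduced_up_to_sign_mneg g : reduced_up_to_sign g -> reduced_up_to_sign (mneg g).
Proof.
  intros [h [[->| ->] Hh]]; exists h; split; auto. left. apply mnegK.
Qed.

Lemma reduced_up_to_sign_mul X :
  (forall h, reduced h -> reduced_up_to_sign (mmul X h)) ->
  forall g, reduced_up_to_sign g -> reduced_up_to_sign (mmul X g).
Proof.
  intros HX g [h [[->| ->] Hh]]; auto.
  rewrite mmulmN. apply reduced_up_to_sign_mneg; auto.
Qed.

Lemma reduced_Tmat h : reduced h -> reduced_up_to_sign (mmul Tmat h).
Proof.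
  intros [->|[Hh|[j Hh]]].
  - rewrite mmulm1. exists Tmat. split; [now left|]. right; left; constructor.
  - destruct Hh as [|j h Hh].
    + rewrite Tmat_mul_Tmat. exists mid. split; [now right|]. now left.
    + rewrite mmulA, Tmat_mul_Tmat, mmulNm, mmul1m. exists h. split; [now right|].
      right; right; eauto.
  - exists (mmul Tmat h). split; [now left|]. right; left. econstructor; eauto.
Qed.

Lemma reduced_Umat h : reduced h -> reduced_up_to_sign (mmul (Umat p) h).
Proof.
  assert (HU : Upow p 1 = Umat p) by (unfold Upow; cbn; apply mmulm1).
  assert (HUj : forall j h, mmul (Umat p) (mmul (Upow p j) h) = mmul (Upow p (S j)) h)
    by (intros; rewrite mmulA; reflexivity).
  intros [->|[Hh|[j Hh]]].
  - rewrite mmulm1, <- HU. exists (Upow p 1). split; [now left|].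
    right; right. exists 1%nat. constructor; lia.
  - rewrite <- HU. exists (mmul (Upow p 1) h). split; [now left|].
    right; right. exists 1%nat. constructor; auto; lia.
  - destruct Hh as [j Hj|j h Hj Hh].
    + change (mmul (Umat p) (Upow p j)) with (Upow p (S j)).
      destruct (Nat.eq_dec (S j) p) as [->|Hne].
      * rewrite Upow_p by exact Hp. exists mid. split; [now right|]. now left.
      * exists (Upow p (S j)). split; [now left|]. right; right. exists (S j). constructor; lia.
    + rewrite HUj. destruct (Nat.eq_dec (S j) p) as [->|Hne].
      * rewrite Upow_p, mmulNm, mmul1m by exact Hp. exists h. split; [now right|]. now right; left.
      * exists (mmul (Upow p (S j)) h). split; [now left|]. right; right. exists (S j).
        constructor; auto; lia.
Qed.

Lemma reduced_up_to_sign_Upow k g :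
  reduced_up_to_sign g -> reduced_up_to_sign (mmul (Upow p k) g).
Proof.
  induction k as [|k IH]; intro Hg; unfold Upow; cbn [mpow_nat].
  - rewrite mmul1m. exact Hg.
  - rewrite <- mmulA. apply (reduced_up_to_sign_mul _ reduced_Umat), IH, Hg.
Qed.

Lemma inGp_reduced_up_to_sign g : inGp p g -> reduced_up_to_sign g.
Proof.
  assert (HT := reduced_up_to_sign_mul _ reduced_Tmat).
  assert (HU := reduced_up_to_sign_mul _ reduced_Umat).
  induction 1 as [|g _ IH|g _ IH|g _ IH|g _ IH].
  - exists mid. split; [now left|]. now left.
  - rewrite Smat_UT, mmulNm, <- mmulA. apply reduced_up_to_sign_mneg; auto.
  - replace (minv (Smat p)) with (mneg (mmul Tmat (Upow p (p - 1)))).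
    + rewrite mmulNm, <- mmulA. apply reduced_up_to_sign_mneg, HT, reduced_up_to_sign_Upow, IH.
    + rewrite Upow_pred_p by exact Hp. unfold Smat, Tmat, mmul, mneg, minv; cbn. f_equal; ring.
  - auto.
  - replace (minv Tmat) with (mneg Tmat) by (unfold minv, mneg, Tmat; cbn; f_equal; ring).
    rewrite mmulNm. apply reduced_up_to_sign_mneg; auto.
Qed.

Lemma translation_notin_Gp t : 0 < t < lam p -> ~ inGp p (Mat 1 t 0 1).
Proof.
  intros Ht HX. pose proof (lam_pos p Hp).
  destruct (inGp_reduced_up_to_sign _ HX) as [h [Hsign Hh]].
  assert (Hmaps : forall A B, (forall v, A v -> A (vopp v)) ->
                  maps_into h A B -> maps_into (Mat 1 t 0 1) A B).
  { intros A B HA HhAB. destruct Hsign as [-> | ->]; auto using maps_into_mneg. }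
  assert (HXv : forall x y, mvec (Mat 1 t 0 1) (x, y) = (x + t * y, y))
    by (intros; unfold mvec; cbn; f_equal; ring).
  assert (Hpos : forall B x y, maps_into h pos_ray B -> 0 < x * y -> B (x + t * y, y)).
  { intros B x y HB Hxy. rewrite <- HXv. exact (Hmaps _ _ pos_ray_vopp HB (x, y) Hxy). }
  assert (Hneg : forall B x y, maps_into h neg_ray B -> x * y < 0 -> B (x + t * y, y)).
  { intros B x y HB Hxy. rewrite <- HXv. exact (Hmaps _ _ neg_ray_vopp HB (x, y) Hxy). }
  (* In each case some test point is translated out of the region h maps it into. *)
  destruct Hh as [->|[Hh|[j Hh]]].
  - destruct Hsign as [E|E]; injection E; lra.
  - destruct (proj1 word_ping_pong h Hh) as [HT|HT]; unfold neg_ray in *.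
    + assert (Hv := Hpos _ 1 1 HT ltac:(lra)). cbn in Hv. lra.
    + assert (Hv := Hneg _ (- t / 2) 1 HT ltac:(lra)). cbn in Hv. lra.
  - destruct (proj2 word_ping_pong j h Hh) as [Hj [HU|HU]].
    + destruct j as [|[|j]]; [lia| |].
      * assert (Hv := Hpos _ (lam p - t) 1 HU ltac:(nra)). cbn in Hv. nra.
      * assert (Hv := Hpos _ (lam p) 1 HU ltac:(nra)). cbn in Hv. nra.
    + assert (Hv := Uregion_pos j _ Hj (Hneg _ (- t - 1) 1 HU ltac:(lra))).
      unfold pos_ray in Hv; cbn in Hv. lra.
Qed.

End PingPong.

Lemma mconj_Smat_upper p g : mc g = 0 -> det g = 1 ->
  mconj g (Smat p) = Mat 1 (md g * md g * lam p) 0 1.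
Proof.
  destruct g as [a b c d]; unfold det, mconj, minv, mmul, Smat; cbn.
  intros -> Hd. f_equal; nra.
Qed.

Lemma upper_triangular_not_hyperbolic p g : (3 <= p)%nat ->
  inGp p g -> mc g = 0 -> ~ hyperbolic_mat g.
Proof.
  intros Hp Hg Hc Hhyp. pose proof (lam_pos p Hp).
  pose proof (inGp_det p g Hg) as Hdet.
  assert (Had : ma g * md g = 1) by (unfold det in Hdet; rewrite Hc in Hdet; lra).
  assert (Htr : (ma g + md g) * (ma g + md g) > 4).
  { unfold hyperbolic_mat, Rabs in Hhyp. destruct (Rcase_abs (ma g + md g)); nra. }
  (* V^-1 S V is the translation by (md V)^2 lambda.  Take V = g or V = g^-1, whose
     md is d resp. a: since ad = 1 and (a + d)^2 > 4, one of d^2, a^2 is below 1. *)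
  assert (Hsmall : forall V, inGp p V -> mc V = 0 -> md V * md V < 1 -> False).
  { intros V HV HcV HdV. apply (translation_notin_Gp p Hp (md V * md V * lam p)).
    - assert (md V <> 0) by (intro E; pose proof (inGp_det p V HV) as HdetV;
        unfold det in HdetV; rewrite E, HcV in HdetV; lra).
      split; [apply Rmult_lt_0_compat; [nra|lra] | nra].
    - rewrite <- (mconj_Smat_upper p V HcV (inGp_det p V HV)).
      apply inGp_mconj; auto using inGp_Smat. }
  destruct (Rlt_or_le (md g * md g) 1) as [Hd|Hd].
  - exact (Hsmall g Hg Hc Hd).
  - apply (Hsmall (minv g)); auto using inGp_inv.
    + cbn. rewrite Hc. ring.
    + cbn. assert (ma g * ma g <> 1) by (intro E; nra). nra.
Qed.

(** * Fixed points under conjugation *)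

Definition denom (M : mat) (x : R) : R := mc M * x + md M.
Definition moeb (M : mat) (x : R) : R := (ma M * x + mb M) / denom M x.
Definition eigen (M : mat) (v : R * R) (mu : R) : Prop :=
  mvec M v = (mu * fst v, mu * snd v).

Lemma fixes_eigen M x : fixes M x <-> denom M x <> 0 /\ eigen M (x, 1) (denom M x).
Proof.
  unfold fixes, eigen, denom, mvec; cbn. split.
  - intros [Hd Hx]. split; [exact Hd|]. f_equal; [|ring].
    transitivity ((ma M * x + mb M) / (mc M * x + md M) * (mc M * x + md M));
      [field; exact Hd | rewrite Hx; ring].
  - intros [Hd He]. split; [exact Hd|]. injection He as He _.
    rewrite Rmult_1_r in He. rewrite He. field. exact Hd.
Qed.

Lemma eigen_denom M x mu : eigen M (x, 1) mu -> denom M x = mu.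
Proof. unfold eigen, mvec, denom; cbn. intro H. injection H as _ H. lra. Qed.

Lemma eigen_infinity M u mu : u <> 0 -> eigen M (u, 0) mu -> mc M = 0.
Proof.
  unfold eigen, mvec; cbn. intros Hu H. injection H as _ H.
  apply (Rmult_eq_reg_r u); [lra | exact Hu].
Qed.

Lemma eigen_scale M v mu k : k <> 0 -> eigen M (k * fst v, k * snd v) mu -> eigen M v mu.
Proof.
  destruct v as [x y]. unfold eigen, mvec; cbn. intros Hk H. injection H as H1 H2.
  f_equal; apply (Rmult_eq_reg_l k); auto; lra.
Qed.

Lemma eigen_mconj V M v mu : det V = 1 -> eigen M v mu -> eigen (mconj V M) (mvec (minv V) v) mu.
Proof.
  intros HV He. unfold eigen, mconj.
  rewrite !mvec_mmul, <- (mvec_mmul V), mmulmV, mvec_mid, He by exact HV.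
  destruct V, v; unfold mvec, mid, minv; cbn. f_equal; ring.
Qed.

Lemma mvec_point M x : denom M x <> 0 -> mvec M (x, 1) = (denom M x * moeb M x, denom M x * 1).
Proof. unfold mvec, moeb, denom; cbn. intro Hd. f_equal; field; exact Hd. Qed.

Lemma fixes_mconj V M x : det V = 1 -> denom (minv V) x <> 0 -> fixes M x ->
  fixes (mconj V M) (moeb (minv V) x) /\ denom (mconj V M) (moeb (minv V) x) = denom M x.
Proof.
  intros HV Hd Hfix. apply fixes_eigen in Hfix as [Hmu He].
  pose proof (eigen_mconj V M _ _ HV He) as He'.
  rewrite mvec_point in He' by exact Hd. apply (eigen_scale _ (_, 1) _ _ Hd) in He'.
  pose proof (eigen_denom _ _ _ He') as E.
  split; [|exact E]. apply fixes_eigen. rewrite E. auto.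
Qed.

Lemma moeb_minvK V x : det V = 1 -> denom (minv V) x <> 0 ->
  denom V (moeb (minv V) x) <> 0 /\ moeb V (moeb (minv V) x) = x.
Proof.
  destruct V as [a b c d]; unfold det, moeb, denom, minv; cbn. intros HV Hd.
  assert (E1 : c * ((d * x + - b) / (- c * x + a)) + d = 1 / (- c * x + a)).
  { transitivity ((a * d - b * c) / (- c * x + a));
      [field; exact Hd | rewrite HV; reflexivity]. }
  assert (E2 : a * ((d * x + - b) / (- c * x + a)) + b = x / (- c * x + a)).
  { transitivity ((a * d - b * c) * x / (- c * x + a));
      [field; exact Hd | rewrite HV; field; exact Hd]. }
  rewrite E1, E2. split.
  - unfold Rdiv. rewrite Rmult_1_l. apply Rinv_neq_0_compat. exact Hd.
  - field. exact Hd.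
Qed.

Lemma fixed_point_formula M x r : mc M <> 0 ->
  (x = (ma M - md M + r) / (2 * mc M) <-> r = 2 * denom M x - (ma M + md M)).
Proof.
  unfold denom. intro Hc. split; intro E.
  - rewrite E. field. exact Hc.
  - rewrite E. field. exact Hc.
Qed.

Lemma hyperbolic_mat_mconj V M : det V = 1 -> hyperbolic_mat (mconj V M) <-> hyperbolic_mat M.
Proof. intro HV. unfold hyperbolic_mat. rewrite mconj_trace by exact HV. reflexivity. Qed.

Section Transport.
Variable p : nat.
Hypothesis Hp : (3 <= p)%nat.

Lemma denom_minv_ne0 V x : inGp p V -> hyp_fixed_point p x -> denom (minv V) x <> 0.
Proof.
  intros HV [M [HM [Hhyp Hfix]]] Hd.
  pose proof (inGp_det p V HV) as HdV.
  apply fixes_eigen in Hfix as [_ He].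
  pose proof (eigen_mconj V M _ _ HdV He) as He'.
  assert (Hv : mvec (minv V) (x, 1) = (ma (minv V) * x + mb (minv V), 0)).
  { unfold mvec, denom in *. cbn [fst snd]. f_equal; [ring | rewrite <- Hd; ring]. }
  assert (Hu : ma (minv V) * x + mb (minv V) <> 0).
  { intro Hu0. destruct V as [a b c d]. unfold denom, det in *; cbn in *. nra. }
  rewrite Hv in He'. apply (upper_triangular_not_hyperbolic p (mconj V M) Hp).
  - exact (inGp_mconj p V M HV HM).
  - exact (eigen_infinity _ _ _ Hu He').
  - apply hyperbolic_mat_mconj; assumption.
Qed.

Lemma hyp_fixed_point_mconj V x : inGp p V -> hyp_fixed_point p x ->
  hyp_fixed_point p (moeb (minv V) x).
Proof.
  intros HV Hx. pose proof (denom_minv_ne0 V x HV Hx) as Hd.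
  destruct Hx as [M [HM [Hhyp Hfix]]]. pose proof (inGp_det p V HV) as HdV.
  exists (mconj V M). split; [|split].
  - exact (inGp_mconj p V M HV HM).
  - apply hyperbolic_mat_mconj; assumption.
  - exact (proj1 (fixes_mconj V M x HdV Hd Hfix)).
Qed.

Lemma stab_generator_mconj V x M : inGp p V -> denom (minv V) x <> 0 ->
  stab_generator p x M -> stab_generator p (moeb (minv V) x) (mconj V M).
Proof.
  intros HV Hd [HM [Hfix Hgen]]. pose proof (inGp_det p V HV) as HdV.
  split; [exact (inGp_mconj p V M HV HM)|].
  split; [exact (proj1 (fixes_mconj V M x HdV Hd Hfix))|].
  intros N HN HfixN.
  destruct (moeb_minvK V x HdV Hd) as [Hd' Hback].
  assert (HfixN' : fixes (mconj (minv V) N) x).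
  { pose proof (fixes_mconj (minv V) N (moeb (minv V) x)) as H.
    rewrite minvK, det_minv, Hback in H. exact (proj1 (H HdV Hd' HfixN)). }
  destruct (Hgen _ (inGp_mconj p _ N (inGp_inv p V HV) HN) HfixN') as [k Hk].
  exists k. rewrite <- (mconjK (minv V)) with (A := N) by (rewrite det_minv; exact HdV).
  rewrite minvK, <- mconj_mpow by exact HdV.
  destruct Hk as [-> | ->]; [left | right]; auto using mconj_mneg.
Qed.

Lemma stab_generator_mc_neq0 x M : hyp_fixed_point p x -> stab_generator p x M -> mc M <> 0.
Proof.
  intros [M0 [HM0 [Hhyp Hfix]]] [_ [_ Hgen]] Hc.
  destruct (Hgen M0 HM0 Hfix) as [k Hk].
  apply (upper_triangular_not_hyperbolic p M0 Hp HM0); [|exact Hhyp].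
  destruct Hk as [-> | ->]; cbn; rewrite mc_mpow by exact Hc; ring.
Qed.

End Transport.

Definition Qmat (M : mat) : bqf := BQF (mc M) (md M - ma M) (- mb M).

Lemma bqf_act_Qmat M V : bqf_act (Qmat M) V = Qmat (mconj V M).
Proof. destruct M, V; unfold bqf_act, Qmat, mconj, mmul, minv; cbn. f_equal; ring. Qed.

Lemma bqf_act_mmul Q A B : bqf_act (bqf_act Q A) B = bqf_act Q (mmul A B).
Proof. destruct Q, A, B; unfold bqf_act, mmul; cbn. f_equal; ring. Qed.

Lemma bqf_act_mid Q : bqf_act Q mid = Q.
Proof. destruct Q; unfold bqf_act, mid; cbn. f_equal; ring. Qed.

Lemma hyperbolic_BQF_act p Q V : (3 <= p)%nat -> inGp p V ->
  hyperbolic_BQF p Q -> hyperbolic_BQF p (bqf_act Q V).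
Proof.
  intros Hp HV [x [Hx [M [Hgen [Hc [Hformula ->]]]]]].
  pose proof (inGp_det p V HV) as HdV.
  pose proof (denom_minv_ne0 p Hp V x HV Hx) as Hd.
  pose proof (stab_generator_mconj p V x M HV Hd Hgen) as Hgen'.
  pose proof (hyp_fixed_point_mconj p Hp V x HV Hx) as Hx'.
  pose proof (stab_generator_mc_neq0 p Hp _ _ Hx' Hgen') as Hc'.
  exists (moeb (minv V) x). split; [exact Hx'|].
  exists (mconj V M). split; [exact Hgen'|]. split; [exact Hc'|]. split.
  - apply fixed_point_formula; [exact Hc'|].
    rewrite mconj_trace, (proj2 (fixes_mconj V M x HdV Hd (proj1 (proj2 Hgen)))) by exact HdV.
    apply fixed_point_formula; [exact Hc | exact Hformula].
  - exact (bqf_act_Qmat M V).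
Qed.

Theorem corollary3p4 (p : nat) (Hp : (3 <= p)%nat) (Q Q' : bqf) :
  lam_BQF p Q -> lam_BQF p Q' -> Gp_equiv p Q Q' ->
  (hyperbolic_BQF p Q <-> hyperbolic_BQF p Q').
Proof.
  intros _ _ [V [HV ->]]. split; [now apply hyperbolic_BQF_act|].
  intro H. replace Q with (bqf_act (bqf_act Q V) (minv V)).
  - apply hyperbolic_BQF_act; auto using inGp_inv.
  - rewrite bqf_act_mmul, mmulmV, bqf_act_mid; [reflexivity|]. exact (inGp_det p V HV).
Qed.
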